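(* Let $p$ and $q$ be $n$-ary terms in the language $\{\wedge,\circ,+\}$, with $p$ not containing $+$. Then the class of all varieties $\mathcal{V}$ such that $p\le q$ holds in $\mathrm{Crr}(\mathbf{A})$ for every $\mathbf{A}\in\mathcal{V}$ is a Mal'cev class. If moreover $q$ does not contain $+$, this class is a strong Mal'cev class.
   Context: For an algebra $\mathbf{A}$, $\mathrm{Crr}(\mathbf{A})$ is the set of all compatible reflexive binary relations of $\mathbf{A}$ (reflexive subuniverses of $\mathbf{A}^2$). For binary relations $R,T$ on $A$ and $k\ge 1$, $R\circ^{(k)}T$ is the set of pairs $(a,b)$ for which there are $c_0=a,c_1,\dots,c_k=b$ with $(c_i,c_{i+1})\in R$ for $i$ even and $(c_i,c_{i+1})\in T$ for $i$ odd; $R\circ T=R\circ^{(2)}T$; $R+T=\bigcup_{k}R\circ^{(k)}T$; $\wedge$ is intersection. A term $p(X_1,\dots,X_n)$ in $\{\wedge,\circ,+\}$ is interpreted on relations in this way. $\mathbf{A}$ satisfies the compatible reflexive relation inequality $p\le q$ if $p(R_1,\dots,R_n)\subseteq q(R_1,\dots,R_n)$ for all $R_1,\dots,R_n\in\mathrm{Crr}(\mathbf{A})$. A strong Mal'cev class is the class of all varieties in which some fixed finite set of equations (with unknown operation symbols) can be realized by terms of the variety; a Mal'cev class is the union of a sequence $\mathcal{K}_1\supseteq\mathcal{K}_2\supseteq\dots$, no wait—more precisely, a union of an increasing chain of strong Mal'cev classes $\mathcal{K}_1\subseteq\mathcal{K}_2\subseteq\cdots$ (each condition implying the next). *)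

From Stdlib Require List.
From mathcomp Require Import all_boot.
Set Implicit Arguments.
Unset Strict Implicit.
Unset Printing Implicit Defensive.

Inductive term (F : Type) (ar : F -> nat) (X : Type) : Type :=
| Var : X -> term ar X
| App : forall f : F, ('I_(ar f) -> term ar X) -> term ar X.
Arguments Var {F ar X} x.
Arguments App {F ar X} f args.

Record algebra (F : Type) (ar : F -> nat) : Type := Algebra {
  carrier :> Type;
  op : forall f : F, ('I_(ar f) -> carrier) -> carrier
}.

Fixpoint eval F (ar : F -> nat) X (A : algebra ar) (v : X -> A) (t : term ar X) : A :=
  match t with
  | Var x => v x
  | App f args => @op _ _ A f (fun i => eval v (args i))
  end.

Definition holds F (ar : F -> nat) (A : algebra ar) (e : term ar nat * term ar nat) : Prop :=
  forall v : nat -> A, eval v e.1 = eval v e.2.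

Record variety : Type := Variety {
  vsym : Type;
  varity : vsym -> nat;
  vaxioms : term varity nat * term varity nat -> Prop
}.

Definition in_variety (V : variety) (A : algebra (@varity V)) : Prop :=
  forall e, @vaxioms V e -> holds A e.

Definition variety_satisfies (V : variety) (e : term (@varity V) nat * term (@varity V) nat) : Prop :=
  forall A : algebra (@varity V), in_variety A -> holds A e.

Fixpoint subst F (ar : F -> nat) X Y (s : X -> term ar Y) (t : term ar X) : term ar Y :=
  match t with
  | Var x => s x
  | App f args => App f (fun i => subst s (args i))
  end.

(* A strong Mal'cev condition: finitely many unknown operation symbols with
   arities, and a finite list of equations between terms in these symbols. *)
Record malcev_condition : Type := MalcevCondition {
  msym : finType;
  marity : msym -> nat;
  meqs : seq (term marity nat * term marity nat)
}.

Fixpoint translate (U : malcev_condition) F (ar : F -> nat)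
  (tr : forall g : msym U, term ar 'I_(marity g)) (t : term (@marity U) nat) : term ar nat :=
  match t with
  | Var x => Var x
  | App g args => subst (fun i => translate tr (args i)) (tr g)
  end.

Definition realizes (V : variety) (U : malcev_condition) : Prop :=
  exists tr : forall g : msym U, term (@varity V) 'I_(marity g),
    forall e, List.In e (meqs U) ->
      variety_satisfies (translate tr e.1, translate tr e.2).

Definition strong_malcev_class (K : variety -> Prop) : Prop :=
  exists U : malcev_condition, forall V : variety, K V <-> realizes V U.

Definition malcev_class (K : variety -> Prop) : Prop :=
  exists U : nat -> malcev_condition,
    (forall k (V : variety), realizes V (U k) -> realizes V (U k.+1)) /\
    (forall V : variety, K V <-> exists k, realizes V (U k)).

Definition crr F (ar : F -> nat) (A : algebra ar) (R : A -> A -> Prop) : Prop :=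
  (forall a, R a a) /\
  (forall f (a b : 'I_(ar f) -> A), (forall i, R (a i) (b i)) -> R (@op _ _ A f a) (@op _ _ A f b)).

(* R o^(k+1) T : alternating chains of length k+1 starting with R. *)
Fixpoint rcompk (A : Type) (k : nat) (R T : A -> A -> Prop) : A -> A -> Prop :=
  match k with
  | 0 => R
  | k'.+1 => fun a b => exists c, R a c /\ rcompk k' T R c b
  end.

Definition rmeet (A : Type) (R T : A -> A -> Prop) : A -> A -> Prop :=
  fun a b => R a b /\ T a b.
Definition rcomp (A : Type) (R T : A -> A -> Prop) : A -> A -> Prop := rcompk 1 R T.
Definition rjoin (A : Type) (R T : A -> A -> Prop) : A -> A -> Prop :=
  fun a b => exists k, rcompk k R T a b.

Inductive rterm (n : nat) : Type :=
| RVar : 'I_n -> rterm n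
| RMeet : rterm n -> rterm n -> rterm n
| RComp : rterm n -> rterm n -> rterm n
| RJoin : rterm n -> rterm n -> rterm n.

Fixpoint rinterp n (A : Type) (R : 'I_n -> A -> A -> Prop) (p : rterm n) : A -> A -> Prop :=
  match p with
  | RVar i => R i
  | RMeet p1 p2 => rmeet (rinterp R p1) (rinterp R p2)
  | RComp p1 p2 => rcomp (rinterp R p1) (rinterp R p2)
  | RJoin p1 p2 => rjoin (rinterp R p1) (rinterp R p2)
  end.

Fixpoint join_free n (p : rterm n) : bool :=
  match p with
  | RVar _ => true
  | RMeet p1 p2 | RComp p1 p2 => join_free p1 && join_free p2
  | RJoin _ _ => false
  end.

Definition crr_ineq F (ar : F -> nat) (A : algebra ar) n (p q : rterm n) : Prop :=
  forall R : 'I_n -> A -> A -> Prop, (forall i, crr (R i)) ->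
    forall a b : A, rinterp R p a b -> rinterp R q a b.

From mathcomp Require Import all_boot.
From Stdlib Require Import FunctionalExtensionality PropExtensionality ProofIrrelevance.
From Stdlib Require Import ClassicalEpsilon.
Set Implicit Arguments. Unset Strict Implicit. Unset Printing Implicit Defensive.

(* A join-free term is a series-parallel graph with
   labelled edges (its "pattern"), and [p(R)] holds of [(a, b)] iff the
   pattern can be mapped into the algebra with source [a], target [b] and
   every edge labelled [i] landing in [R i].  Testing [p <= q] in the free
   algebra of a variety [V] over the vertices of the pattern of [p], with
   [R i] the compatible reflexive relation generated by the edges labelled
   [i], is decisive: the generators [x_0, x_1] are [q]-related there iff [V]
   satisfies [p <= q].  Pairs of the generated relations are values of one
   term at two valuations, so when [q] is join-free as well this test is a
   strong Mal'cev condition: terms for the vertices and edges of the pattern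
   of [q] subject to finitely many identities.  For arbitrary [q], every join
   is replaced by alternating chains of length [k+1]; this gives an
   increasing chain of join-free terms whose union is [q], and hence an
   increasing chain of strong Mal'cev conditions whose union is [p <= q]. *)

Lemma subst_ext F (ar : F -> nat) X Y (s s' : X -> term ar Y) (t : term ar X) :
  (forall x, s x = s' x) -> subst s t = subst s' t.
Proof.
move=> eq_s; elim: t => [x|f args IH] /=; first exact: eq_s.
by congr (App f _); apply: functional_extensionality => i; apply: IH.
Qed.

Lemma subst_var F (ar : F -> nat) X (t : term ar X) : subst (fun x => Var x) t = t.
Proof.
elim: t => [x|f args IH] //=.
by congr (App f _); apply: functional_extensionality => i; apply: IH.
Qed.

Lemma subst_subst F (ar : F -> nat) X Y Z (s : X -> term ar Y) (s' : Y -> term ar Z)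
    (t : term ar X) :
  subst s' (subst s t) = subst (fun x => subst s' (s x)) t.
Proof.
elim: t => [x|f args IH] //=.
by congr (App f _); apply: functional_extensionality => i; apply: IH.
Qed.

Lemma eval_subst F (ar : F -> nat) X Y (A : algebra ar) (w : Y -> A)
    (s : X -> term ar Y) (t : term ar X) :
  eval w (subst s t) = eval (fun x => eval w (s x)) t.
Proof.
elim: t => [x|f args IH] //=.
by congr (op _); apply: functional_extensionality => i; apply: IH.
Qed.

Lemma crr_eval F (ar : F -> nat) X (A : algebra ar) (R : A -> A -> Prop)
    (al be : X -> A) (t : term ar X) :
  crr R -> (forall x, R (al x) (be x)) -> R (eval al t) (eval be t).
Proof.
move=> [_ R_op] R_val; elim: t => [x|f args IH] /=; first exact: R_val.
by apply: R_op => i; apply: IH.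
Qed.

Definition subrel (A : Type) (R T : A -> A -> Prop) : Prop := forall a b, R a b -> T a b.
Definition reflexive_rel (A : Type) (R : A -> A -> Prop) : Prop := forall a, R a a.

Lemma rcompk_mono A k (R T R' T' : A -> A -> Prop) :
  subrel R R' -> subrel T T' -> subrel (rcompk k R T) (rcompk k R' T').
Proof.
elim: k R T R' T' => [|k IH] R T R' T' RR' TT' a b /=; first exact: RR'.
by move=> [c [Rac Tcb]]; exists c; split; [apply: RR' | apply: (IH T R)].
Qed.

Lemma rcompk_step A k (R T : A -> A -> Prop) :
  reflexive_rel R -> reflexive_rel T -> subrel (rcompk k R T) (rcompk k.+1 R T).
Proof.
elim: k R T => [|k IH] R T R_refl T_refl a b /=.
  by move=> Rab; exists b; split; last apply: T_refl.
by move=> [c [Rac Tcb]]; exists c; split; last apply: IH.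
Qed.

Lemma rcompk_leq A k m (R T : A -> A -> Prop) :
  reflexive_rel R -> reflexive_rel T -> k <= m -> subrel (rcompk k R T) (rcompk m R T).
Proof.
move=> R_refl T_refl; elim: m => [|m IH]; first by rewrite leqn0 => /eqP ->.
rewrite leq_eqVlt => /orP [/eqP -> //|]; rewrite ltnS => /IH le_km a b /le_km.
exact: rcompk_step.
Qed.

(* A chain of fixed length between unions of increasing families of relations
   lies in a single member of the families: the chain has finitely many links. *)
Lemma rcompk_union A m (R T : A -> A -> Prop) (Rk Tk : nat -> A -> A -> Prop) :
  (forall k k', k <= k' -> subrel (Rk k) (Rk k')) ->
  (forall k k', k <= k' -> subrel (Tk k) (Tk k')) ->
  (forall a b, R a b -> exists k, Rk k a b) -> (forall a b, T a b -> exists k, Tk k a b) ->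
  forall a b, rcompk m R T a b -> exists k, rcompk m (Rk k) (Tk k) a b.
Proof.
elim: m R T Rk Tk => [|m IH] R T Rk Tk Rk_mono Tk_mono R_sub T_sub a b /=; first exact: R_sub.
move=> [c [/R_sub [k1 Rac] /(IH T R Tk Rk Tk_mono Rk_mono T_sub R_sub) [k2 chain]]].
exists (maxn k1 k2), c; split; first exact: Rk_mono (leq_maxl _ _) _ _ Rac.
by apply: rcompk_mono chain; [apply: Tk_mono | apply: Rk_mono]; apply: leq_maxr.
Qed.

Definition all_reflexive n A (R : 'I_n -> A -> A -> Prop) : Prop :=
  forall i, reflexive_rel (R i).

Lemma rinterp_refl n A (R : 'I_n -> A -> A -> Prop) (p : rterm n) :
  all_reflexive R -> reflexive_rel (rinterp R p).
Proof.
move=> R_refl; elim: p => [i|p1 IH1 p2 IH2|p1 IH1 p2 IH2|p1 IH1 p2 IH2] a /=.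
- exact: R_refl.
- by split; [apply: IH1 | apply: IH2].
- by exists a; split; [apply: IH1 | apply: IH2].
- by exists 0; apply: IH1.
Qed.

Fixpoint chain_term n k (a b : rterm n) : rterm n :=
  match k with 0 => a | k'.+1 => RComp a (chain_term k' b a) end.

Lemma chain_termE n A (R : 'I_n -> A -> A -> Prop) k a b x y :
  rinterp R (chain_term k a b) x y <-> rcompk k (rinterp R a) (rinterp R b) x y.
Proof.
elim: k a b x y => [|k IH] a b x y //=.
by split=> -[c [h1 h2]]; exists c; split => //; apply/IH.
Qed.

Fixpoint unjoin n k (q : rterm n) : rterm n :=
  match q with
  | RVar i => RVar i
  | RMeet a b => RMeet (unjoin k a) (unjoin k b)
  | RComp a b => RComp (unjoin k a) (unjoin k b)
  | RJoin a b => chain_term k (unjoin k a) (unjoin k b)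
  end.

Lemma unjoin_join_free n k (q : rterm n) : join_free (unjoin k q).
Proof.
have chain_jf a b : join_free a -> join_free b -> join_free (chain_term k a b).
  by elim: k a b => [|k IH] a b //= ja jb; rewrite ja IH.
by elim: q => //= a ja b jb; rewrite ?ja ?jb ?chain_jf.
Qed.

Lemma unjoin_sub n A (R : 'I_n -> A -> A -> Prop) k q :
  subrel (rinterp R (unjoin k q)) (rinterp R q).
Proof.
elim: q => [i|a IHa b IHb|a IHa b IHb|a IHa b IHb] x y //=.
- by move=> [h1 h2]; split; [apply: IHa | apply: IHb].
- by move=> [c [h1 h2]]; exists c; split; [apply: IHa | apply: IHb].
- by move/chain_termE => chain; exists k; apply: rcompk_mono chain.
Qed.

Lemma unjoin_mono n A (R : 'I_n -> A -> A -> Prop) q k m :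
  all_reflexive R -> k <= m -> subrel (rinterp R (unjoin k q)) (rinterp R (unjoin m q)).
Proof.
move=> R_refl le_km; elim: q => [i|a IHa b IHb|a IHa b IHb|a IHa b IHb] x y //=.
- by move=> [h1 h2]; split; [apply: IHa | apply: IHb].
- by move=> [c [h1 h2]]; exists c; split; [apply: IHa | apply: IHb].
- move/chain_termE => chain; apply/chain_termE.
  apply: (rcompk_leq (rinterp_refl _ R_refl) (rinterp_refl _ R_refl) le_km).
  exact: rcompk_mono chain.
Qed.

Lemma unjoin_exhaust n A (R : 'I_n -> A -> A -> Prop) q :
  all_reflexive R -> forall x y, rinterp R q x y -> exists k, rinterp R (unjoin k q) x y.
Proof.
move=> R_refl; have mono k k' := @unjoin_mono n A R _ k k' R_refl.
elim: q => [i|a IHa b IHb|a IHa b IHb|a IHa b IHb] x y /=.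
- by move=> h; exists 0.
- move=> [/IHa [k1 h1] /IHb [k2 h2]]; exists (maxn k1 k2).
  by split; [apply: mono (leq_maxl _ _) _ _ h1 | apply: mono (leq_maxr _ _) _ _ h2].
- move=> [c [/IHa [k1 h1] /IHb [k2 h2]]]; exists (maxn k1 k2), c.
  by split; [apply: mono (leq_maxl _ _) _ _ h1 | apply: mono (leq_maxr _ _) _ _ h2].
- move=> [m /(rcompk_union (mono a) (mono b) IHa IHb) [k chain]].
  exists (maxn k m); apply/chain_termE.
  apply: (rcompk_leq (rinterp_refl _ R_refl) (rinterp_refl _ R_refl) (leq_maxr k m)).
  by apply: rcompk_mono chain; apply: mono (leq_maxl k m).
Qed.

(* A join-free term [p] is a series-parallel
   graph: [pattern p s t fresh] lists its labelled edges [(u, v, i)] between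
   the source vertex [s] and the target vertex [t], inner vertices being
   numbered from [fresh]; the second component is the next unused vertex. *)

Definition edge : Type := (nat * nat * nat)%type.

Fixpoint pattern n (p : rterm n) (s t fresh : nat) : seq edge * nat :=
  match p with
  | RVar i => ([:: (s, t, nat_of_ord i)], fresh)
  | RMeet p1 p2 =>
      let r1 := pattern p1 s t fresh in
      let r2 := pattern p2 s t r1.2 in (r1.1 ++ r2.1, r2.2)
  | RComp p1 p2 =>
      let r1 := pattern p1 s fresh fresh.+1 in
      let r2 := pattern p2 fresh t r1.2 in (r1.1 ++ r2.1, r2.2)
  | RJoin _ _ => ([::], fresh)
  end.

Definition labelled n A (R : 'I_n -> A -> A -> Prop) (l : nat) (a b : A) : Prop :=
  exists i : 'I_n, nat_of_ord i = l /\ R i a b.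

Definition edges_hold n A (R : 'I_n -> A -> A -> Prop) (v : nat -> A) (E : seq edge) : Prop :=
  forall e, e \in E -> labelled R e.2 (v e.1.1) (v e.1.2).

Lemma edges_hold_cat n A (R : 'I_n -> A -> A -> Prop) v E1 E2 :
  edges_hold R v (E1 ++ E2) <-> edges_hold R v E1 /\ edges_hold R v E2.
Proof.
split; first by move=> h; split=> e he; apply: h; rewrite mem_cat he ?orbT.
by move=> [h1 h2] e; rewrite mem_cat => /orP [/h1|/h2].
Qed.

Lemma pattern_labels n (p : rterm n) s t fresh e :
  e \in (pattern p s t fresh).1 -> e.2 < n.
Proof.
elim: p s t fresh => [i|a IHa b IHb|a IHa b IHb|a IHa b IHb] s t fresh //=.
- by rewrite inE => /eqP -> /=; apply: ltn_ord.
- by rewrite mem_cat => /orP [/IHa|/IHb].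
- by rewrite mem_cat => /orP [/IHa|/IHb].
Qed.

Lemma pattern_bound n (p : rterm n) s t fresh : s < fresh -> t < fresh ->
  fresh <= (pattern p s t fresh).2 /\
  forall e, e \in (pattern p s t fresh).1 ->
    e.1.1 < (pattern p s t fresh).2 /\ e.1.2 < (pattern p s t fresh).2.
Proof.
elim: p s t fresh => [i|a IHa b IHb|a IHa b IHb|a IHa b IHb] s t fresh s_lt t_lt //=.
- by split=> // e; rewrite inE => /eqP ->.
- have [le1 bnd1] := IHa s t fresh s_lt t_lt.
  have [le2 bnd2] := IHb s t _ (leq_trans s_lt le1) (leq_trans t_lt le1).
  split=> [|e]; first exact: leq_trans le2.
  by rewrite mem_cat => /orP [/bnd1 [lt1 lt2]|/bnd2 //]; split; apply: leq_trans le2.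
- have [le1 bnd1] := IHa s fresh fresh.+1 (ltnW s_lt) (ltnSn fresh).
  have [le2 bnd2] := IHb fresh t _ le1 (leq_trans t_lt (ltnW le1)).
  split=> [|e]; first exact: ltnW (leq_trans le1 le2).
  by rewrite mem_cat => /orP [/bnd1 [lt1 lt2]|/bnd2 //]; split; apply: leq_trans le2.
Qed.

Lemma pattern_sound n A (R : 'I_n -> A -> A -> Prop) (p : rterm n) s t fresh v :
  join_free p -> edges_hold R v (pattern p s t fresh).1 -> rinterp R p (v s) (v t).
Proof.
elim: p s t fresh => [i|a IHa b IHb|a IHa b IHb|a IHa b IHb] s t fresh //=.
- move=> _ /(_ _ (mem_head _ _)) [j [/= /val_inj <- //]].
- by move=> /andP [ja jb] /edges_hold_cat [h1 h2]; split; [apply: IHa h1 | apply: IHb h2].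
- move=> /andP [ja jb] /edges_hold_cat [h1 h2].
  by exists (v fresh); split; [apply: IHa h1 | apply: IHb h2].
Qed.

Lemma edges_hold_ext n A (R : 'I_n -> A -> A -> Prop) v v' m E :
  (forall x, x < m -> v x = v' x) -> (forall e, e \in E -> e.1.1 < m /\ e.1.2 < m) ->
  edges_hold R v E -> edges_hold R v' E.
Proof. by move=> eq_v bnd h e he; have [lt1 lt2] := bnd e he; rewrite -!eq_v //; apply: h. Qed.

Lemma pattern_complete n A (R : 'I_n -> A -> A -> Prop) (p : rterm n) s t fresh
    (v : nat -> A) :
  join_free p -> s < fresh -> t < fresh -> rinterp R p (v s) (v t) ->
  exists v', (forall x, x < fresh -> v' x = v x) /\ edges_hold R v' (pattern p s t fresh).1.
Proof.
elim: p s t fresh v => [i|a IHa b IHb|a IHa b IHb|a IHa b IHb] s t fresh v //= jf s_lt t_lt.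
- by move=> h; exists v; split=> // e; rewrite inE => /eqP -> /=; exists i.
- case/andP: jf => ja jb [h1 h2].
  have [le1 bnd1] := pattern_bound a s_lt t_lt.
  have [v1 [eq1 hold1]] := IHa s t fresh v ja s_lt t_lt h1.
  have h2' : rinterp R b (v1 s) (v1 t) by rewrite !eq1.
  have [v2 [eq2 hold2]] := IHb s t _ v1 jb (leq_trans s_lt le1) (leq_trans t_lt le1) h2'.
  exists v2; split=> [x x_lt|]; first by rewrite eq2 ?eq1 //; apply: leq_trans x_lt le1.
  apply/edges_hold_cat; split=> //.
  by apply: (edges_hold_ext _ bnd1 hold1) => x x_lt; rewrite eq2.
- case/andP: jf => ja jb [c [h1 h2]].
  pose w x := if x == fresh then c else v x.
  have s_lt1 : s < fresh.+1 by apply: ltnW.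
  have [le1 bnd1] := pattern_bound a s_lt1 (ltnSn fresh).
  have h1' : rinterp R a (w s) (w fresh) by rewrite /w eqxx (ltn_eqF s_lt).
  have [v1 [eq1 hold1]] := IHa s fresh fresh.+1 w ja s_lt1 (ltnSn fresh) h1'.
  have h2' : rinterp R b (v1 fresh) (v1 t).
    by rewrite !eq1 // /w ?eqxx ?(ltn_eqF t_lt) // ltnW.
  have [v2 [eq2 hold2]] := IHb fresh t _ v1 jb le1 (leq_trans t_lt (ltnW le1)) h2'.
  exists v2; split=> [x x_lt|].
    rewrite eq2 ?eq1 ?(ltn_trans x_lt le1) //; last exact: ltnW.
    by rewrite /w (ltn_eqF x_lt).
  apply/edges_hold_cat; split=> //.
  by apply: (edges_hold_ext _ bnd1 hold1) => x x_lt; rewrite eq2.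
Qed.

Definition veq (V : variety) X (s t : term (@varity V) X) : Prop :=
  forall A : algebra (@varity V), in_variety A -> forall w : X -> A, eval w s = eval w t.

Lemma veq_subst (V : variety) X Y (sg : X -> term (@varity V) Y) (s t : term (@varity V) X) :
  veq s t -> veq (subst sg s) (subst sg t).
Proof. by move=> st A A_in w; rewrite !eval_subst; apply: st. Qed.

Lemma veq_satisfies (V : variety) (s t : term (@varity V) nat) :
  veq s t -> variety_satisfies (s, t).
Proof. by []. Qed.

Section FreeAlgebra.
Variables (V : variety) (X : Type).
Local Notation tm := (term (@varity V) X).

Lemma veq_sym (s t : tm) : veq s t -> veq t s.
Proof. by move=> st A A_in w; rewrite st. Qed.

Lemma veq_trans (s t u : tm) : veq s t -> veq t u -> veq s u.
Proof. by move=> st tu A A_in w; rewrite st ?tu. Qed.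

Lemma veq_App f (a b : 'I_(varity f) -> tm) :
  (forall j, veq (a j) (b j)) -> veq (App f a) (App f b).
Proof.
by move=> ab A A_in w /=; congr (op _); apply: functional_extensionality => j; apply: ab.
Qed.

(* The carrier is the set of [veq]-classes of terms over [X]. *)
Definition free_carrier : Type := {P : tm -> Prop | exists t, P = veq t}.

Definition class_of (t : tm) : free_carrier := exist _ (veq t) (ex_intro _ t erefl).

Definition repr (a : free_carrier) : tm :=
  proj1_sig (constructive_indefinite_description _ (proj2_sig a)).

Lemma free_carrier_eq (a b : free_carrier) : proj1_sig a = proj1_sig b -> a = b.
Proof.
case: a => P P_class; case: b => P' P'_class /= eq_P; subst P'.
by rewrite (proof_irrelevance _ P_class P'_class).
Qed.

Lemma class_of_repr a : class_of (repr a) = a.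
Proof.
apply: free_carrier_eq; rewrite /repr /=.
by case: constructive_indefinite_description.
Qed.

Lemma class_of_eq (s t : tm) : veq s t -> class_of s = class_of t.
Proof.
move=> st; apply: free_carrier_eq => /=; apply: functional_extensionality => u.
apply: propositional_extensionality.
by split=> h; [apply: veq_trans (veq_sym st) h | apply: veq_trans st h].
Qed.

Lemma class_of_inj (s t : tm) : class_of s = class_of t -> veq s t.
Proof.
move/(congr1 (@proj1_sig _ _)) => /= eq_st.
by rewrite eq_st => A A_in w.
Qed.

Definition free_op (f : vsym V) (a : 'I_(varity f) -> free_carrier) : free_carrier :=
  class_of (App f (fun j => repr (a j))).

Definition free_alg : algebra (@varity V) := @Algebra _ _ free_carrier free_op.

Definition gen_of (x : X) : free_alg := class_of (Var x).

Lemma free_op_class f (t : 'I_(varity f) -> tm) :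
  free_op (fun j => class_of (t j)) = class_of (App f t).
Proof.
apply: class_of_eq; apply: veq_App => j; apply: class_of_inj; exact: class_of_repr.
Qed.

Lemma eval_class Y (sg : Y -> tm) t :
  eval (A := free_alg) (fun y => class_of (sg y)) t = class_of (subst sg t).
Proof.
elim: t => [y|f args IH] //=; rewrite -free_op_class; congr free_op.
by apply: functional_extensionality => j; apply: IH.
Qed.

Lemma free_alg_in_variety : in_variety free_alg.
Proof.
move=> e axiom v; have -> : v = fun y => class_of (repr (v y)).
  by apply: functional_extensionality => y; rewrite class_of_repr.
rewrite !eval_class; apply: class_of_eq; apply: veq_subst => A A_in w.
exact: A_in e axiom w.
Qed.

Section Generated.
Variables (E : Type) (l r : E -> X).

Definition ends (f : E -> X) (y : E + X) : X :=
  match y with inl e => f e | inr x => x end.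

Inductive generated : free_alg -> free_alg -> Prop :=
| generated_base e : generated (gen_of (l e)) (gen_of (r e))
| generated_refl a : generated a a
| generated_op f (a b : 'I_(varity f) -> free_alg) :
    (forall j, generated (a j) (b j)) -> generated (free_op a) (free_op b).

Lemma generated_crr : crr generated.
Proof. by split=> [|f a b]; [apply: generated_refl | apply: generated_op]. Qed.

Lemma generated_term a b : generated a b ->
  exists tau : term (@varity V) (E + X),
    a = class_of (subst (fun y => Var (ends l y)) tau) /\
    b = class_of (subst (fun y => Var (ends r y)) tau).
Proof.
elim=> [e|{}a|f {}a {}b _ IH]; first by exists (Var (inl e)).
- exists (subst (fun x => Var (inr x)) (repr a)); rewrite !subst_subst /= subst_var.
  by rewrite class_of_repr.
- have [taus taus_spec] := choice _ IH.
  exists (App f taus) => /=; rewrite -!free_op_class.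
  by split; congr free_op; apply: functional_extensionality => j; case: (taus_spec j).
Qed.

End Generated.
End FreeAlgebra.

Lemma mem_In (T : eqType) (x : T) (s : seq T) : x \in s -> List.In x s.
Proof. by elim: s => //= y s IH; rewrite inE => /orP [/eqP ->|/IH]; [left | right]. Qed.

(* Its variables are indexed by the edges and the vertices of the
   pattern of [p]; a variable is evaluated at its "source value" (an edge at
   its source, a vertex at itself) or, for a label [l], at its "[l]-target
   value" (an edge labelled [l] at its target, any other edge at its source).
   There is a symbol [t_w] for each vertex [w] of the pattern of [q] and a
   symbol [s_e] for each of its edges [e = (w1, w2, l)], subject to
     t_0(sources) = x_0,   t_1(sources) = x_1,
     t_w1(sources) = s_e(sources),   t_w2(sources) = s_e(l-targets). *)
Section Condition.
Variables (n : nat) (p q : rterm n).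

Definition pedges : seq edge := (pattern p 0 1 2).1.
Definition pverts : nat := (pattern p 0 1 2).2.
Definition qedges : seq edge := (pattern q 0 1 2).1.
Definition qverts : nat := (pattern q 0 1 2).2.

Definition no_edge : edge := (0, 0, 0).
Definition pedge (e : 'I_(size pedges)) : edge := nth no_edge pedges e.
Definition source (e : 'I_(size pedges)) : nat := (pedge e).1.1.
Definition target (l : nat) (e : 'I_(size pedges)) : nat :=
  if (pedge e).2 == l then (pedge e).1.2 else (pedge e).1.1.

Definition cond_arity : nat := size pedges + pverts.+1.

Definition var_vertex (f : 'I_(size pedges) -> nat) (k : 'I_cond_arity) : nat :=
  match split k with inl e => f e | inr x => val x end.

Definition cond_sym : finType := ('I_qverts.+1 + 'I_(size qedges))%type.
Local Notation cterm := (term (fun _ : cond_sym => cond_arity) nat).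

Definition vertex_sym (w : nat) : cond_sym := inl (inord w).
Definition at_sources (k : 'I_cond_arity) : cterm := Var (var_vertex source k).
Definition at_targets (l : nat) (k : 'I_cond_arity) : cterm := Var (var_vertex (target l) k).

Definition edge_eqs (e : 'I_(size qedges)) : seq (cterm * cterm) :=
  let: (w1, w2, l) := nth no_edge qedges e in
  [:: (App (vertex_sym w1) at_sources, App (inr e : cond_sym) at_sources);
      (App (vertex_sym w2) at_sources, App (inr e : cond_sym) (at_targets l))].

Definition condition : malcev_condition :=
  @MalcevCondition cond_sym (fun _ => cond_arity)
    ((App (vertex_sym 0) at_sources, Var 0) :: (App (vertex_sym 1) at_sources, Var 1) ::
     List.flat_map edge_eqs (enum 'I_(size qedges))).

Lemma edge_eqs_in_condition e eqn : List.In eqn (edge_eqs e) -> List.In eqn (meqs condition).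
Proof.
move=> eqn_in; right; right; apply/List.in_flat_map.
by exists e; split=> //; apply: mem_In; rewrite mem_enum.
Qed.

Lemma pedges_bound : 2 <= pverts /\ forall e, e \in pedges -> e.1.1 < pverts /\ e.1.2 < pverts.
Proof. exact: pattern_bound. Qed.

Lemma qedges_bound : 2 <= qverts /\ forall e, e \in qedges -> e.1.1 < qverts /\ e.1.2 < qverts.
Proof. exact: pattern_bound. Qed.

Lemma var_vertex_related A (R : 'I_n -> A -> A -> Prop) (v : nat -> A) :
  all_reflexive R -> edges_hold R v pedges ->
  forall (i : 'I_n) k, R i (v (var_vertex source k)) (v (var_vertex (target i) k)).
Proof.
move=> R_refl v_edges i k; rewrite /var_vertex /target.
case: (split k) => [e|x]; last exact: R_refl.
case: eqP => [label_i|_]; last exact: R_refl.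
have [j [j_label Rj]] := v_edges _ (mem_nth no_edge (ltn_ord e)).
by rewrite -[i](@val_inj _ _ _ j) //= j_label label_i.
Qed.

Lemma condition_sound (V : variety) : join_free p -> join_free q ->
  realizes V condition -> forall A : algebra (@varity V), in_variety A -> crr_ineq A p q.
Proof.
move=> jp jq [tr tr_eqs] A A_in R R_crr a b pab.
have [v [v_init v_edges]] :=
  pattern_complete (v := fun k => if k == 0 then a else b) (s := 0) (t := 1) (fresh := 2)
    jp isT isT pab.
have R_refl : all_reflexive R by move=> i; case: (R_crr i).
have eval_eq s t : List.In (s, t) (meqs condition) ->
    eval v (translate tr s) = eval v (translate tr t).
  by move=> eqn_in; apply: (tr_eqs _ eqn_in).
pose y w := eval (fun k => v (var_vertex source k)) (tr (vertex_sym w)).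
have -> : a = y 0.
  rewrite -[a](v_init 0 isT) /y; have := eval_eq _ _ (or_introl erefl).
  by rewrite /= eval_subst => ->.
have -> : b = y 1.
  rewrite -[b](v_init 1 isT) /y; have := eval_eq _ _ (or_intror (or_introl erefl)).
  by rewrite /= eval_subst => ->.
apply: (pattern_sound (fresh := 2)) => // -[[w1 w2] l] e_in.
have e_lt : index (w1, w2, l) qedges < size qedges by rewrite index_mem.
have eqs_in := @edge_eqs_in_condition (Ordinal e_lt).
rewrite /edge_eqs /= nth_index // in eqs_in.
rewrite /y; have := eval_eq _ _ (eqs_in _ (or_introl erefl)).
rewrite /= !eval_subst /= => ->; have := eval_eq _ _ (eqs_in _ (or_intror (or_introl erefl))).
rewrite /= !eval_subst /= => ->.
set i := Ordinal (pattern_labels e_in); exists i; split=> //.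
apply: (@crr_eval _ _ _ A (R i) _ _ _ (R_crr i)) => k.
exact: (var_vertex_related R_refl v_edges).
Qed.

(* The free algebra of [V] over the vertices of the pattern of [p]; for each
   label [i], its edges labelled [i] generate the relation [edge_relation V i]
   (every other edge contributes a trivial pair). *)
Definition vertex : Type := 'I_pverts.+1.

Definition generator (V : variety) (w : nat) : free_alg V vertex := gen_of V (inord w).

Definition edge_relation (V : variety) (i : 'I_n) :
  free_alg V vertex -> free_alg V vertex -> Prop :=
  @generated V _ _ (fun e => inord (source e)) (fun e => inord (target i e)).

Lemma edge_relation_crr (V : variety) (i : 'I_n) :
  crr (A := free_alg V vertex) (@edge_relation V i).
Proof. exact: generated_crr. Qed.

Lemma generators_in_p (V : variety) :
  join_free p -> rinterp (@edge_relation V) p (generator V 0) (generator V 1).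
Proof.
move=> jp; apply: (pattern_sound (fresh := 2)) => // -[[u v] l] e_in.
have e_lt : index (u, v, l) pedges < size pedges by rewrite index_mem.
exists (Ordinal (pattern_labels e_in)); split=> //.
have := @generated_base V vertex _
  (fun e => inord (source e)) (fun e => inord (target l e)) (Ordinal e_lt).
by rewrite /source /target /pedge /= nth_index //= eqxx.
Qed.

(* Edges of [p] are sent to genuine vertices, so [inord] does not truncate. *)
Lemma pedge_vertex_bound (e : 'I_(size pedges)) :
  source e < pverts.+1 /\ forall l, target l e < pverts.+1.
Proof.
have [_ /(_ _ (mem_nth no_edge (ltn_ord e))) [lt1 lt2]] := pedges_bound.
split=> [|l]; first exact: ltnW lt1.
by rewrite /target; case: ifP => _; [apply: ltnW lt2 | apply: ltnW lt1].
Qed.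

Definition as_nat (V : variety) (t : term (@varity V) vertex) : term (@varity V) nat :=
  subst (fun x => Var (val x)) t.

Lemma veq_as_nat (V : variety) (a : free_alg V vertex) (t : term (@varity V) vertex) :
  a = class_of t -> veq (as_nat (repr a)) (as_nat t).
Proof. by move=> ->; apply: veq_subst; apply: class_of_inj; rewrite class_of_repr. Qed.

Lemma as_nat_ends (V : variety) (f : 'I_(size pedges) -> nat)
    (tau : term (@varity V) ('I_(size pedges) + vertex)) :
  (forall e, f e < pverts.+1) ->
  as_nat (subst (fun y => Var (ends (fun e => inord (f e)) y)) tau) =
  subst (fun k => Var (var_vertex f k)) (subst (fun y => Var (unsplit y)) tau).
Proof.
move=> f_lt; rewrite /as_nat !subst_subst; apply: subst_ext => y /=.
by rewrite /var_vertex unsplitK; case: y => [e|x] //=; rewrite inordK.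
Qed.

(* The terms of a realization of the condition: the vertex symbols are
   interpreted by representatives of vertex images, the edge symbols by terms
   witnessing that edge images are related. *)
Definition vertex_term (V : variety) (a : free_alg V vertex) :
  term (@varity V) 'I_cond_arity :=
  subst (fun x => Var (unsplit (inr x))) (repr a).

Definition edge_term (V : variety) (tau : term (@varity V) ('I_(size pedges) + vertex)) :
  term (@varity V) 'I_cond_arity := subst (fun y => Var (unsplit y)) tau.

Lemma vertex_term_at (V : variety) (f : 'I_(size pedges) -> nat) (a : free_alg V vertex) :
  subst (fun k => Var (var_vertex f k)) (vertex_term a) = as_nat (repr a).
Proof.
rewrite /vertex_term subst_subst; apply: subst_ext => x.
by rewrite /= /var_vertex -[rshift _ x]/(unsplit (inr x)) unsplitK.
Qed.

Lemma edge_witness (V : variety) (h : nat -> free_alg V vertex) (e : 'I_(size qedges)) :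
  edges_hold (@edge_relation V) h qedges ->
  exists tau : term (@varity V) ('I_(size pedges) + vertex),
    let: (w1, w2, l) := nth no_edge qedges e in
    h w1 = class_of (subst (fun y => Var (ends (fun d => inord (source d)) y)) tau) /\
    h w2 = class_of (subst (fun y => Var (ends (fun d => inord (target l d)) y)) tau).
Proof.
move/(_ _ (mem_nth no_edge (ltn_ord e))).
case: (nth no_edge qedges e) => [[w1 w2] l] [i [/= <- gen_i]].
exact: generated_term gen_i.
Qed.

Lemma condition_complete (V : variety) : join_free q ->
  rinterp (@edge_relation V) q (generator V 0) (generator V 1) -> realizes V condition.
Proof.
move=> jq q01.
have [h [h_init h_edges]] :=
  pattern_complete (v := generator V) (s := 0) (t := 1) (fresh := 2) jq isT isT q01.
have [taus taus_spec] := choice _ (fun e => edge_witness e h_edges).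
have [[p2 _] [q2 q_bnd]] := (pedges_bound, qedges_bound).
pose tr : forall g : msym condition, term (@varity V) 'I_(marity g) := fun g : cond_sym =>
  match g with inl w => vertex_term (h w) | inr e => edge_term (taus e) end.
have vertex_eq w : w < qverts ->
    translate tr (App (vertex_sym w) at_sources) = as_nat (repr (h w)).
  by move=> w_lt; rewrite /= inordK ?vertex_term_at //; apply: ltnW.
have source_lt e : source e < pverts.+1 := (pedge_vertex_bound e).1.
have target_lt l e : target l e < pverts.+1 := (pedge_vertex_bound e).2 l.
exists tr => -[s t] [<-|[<-|/List.in_flat_map [e [_]]]].
- rewrite (vertex_eq 0) ?(ltnW q2) //; apply: veq_satisfies.
  by have := veq_as_nat (h_init 0 isT); rewrite /as_nat /= inordK.
- rewrite (vertex_eq 1) //; apply: veq_satisfies.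
  by have := veq_as_nat (h_init 1 isT); rewrite /as_nat /= inordK // (leqW p2).
- have := taus_spec e; rewrite /edge_eqs.
  case E: (nth no_edge qedges e) => [[w1 w2] l] [h1 h2].
  have [w1_lt w2_lt] : w1 < qverts /\ w2 < qverts.
    by have := q_bnd _ (mem_nth no_edge (ltn_ord e)); rewrite E.
  move=> [[<- <-]|[[<- <-]|[]]]; rewrite vertex_eq //; apply: veq_satisfies.
  + by apply: veq_trans (veq_as_nat h1) _; rewrite (as_nat_ends _ source_lt).
  + by apply: veq_trans (veq_as_nat h2) _; rewrite (as_nat_ends _ (target_lt l)).
Qed.

End Condition.

Definition satisfies_ineq (V : variety) n (p q : rterm n) : Prop :=
  forall A : algebra (@varity V), in_variety A -> crr_ineq A p q.

Lemma ineq_at_generators (V : variety) n (p r : rterm n) :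
  join_free p -> satisfies_ineq V p r ->
  rinterp (@edge_relation n p V) r (generator p V 0) (generator p V 1).
Proof.
move=> jp ineq; apply: (ineq _ (@free_alg_in_variety V (vertex p))).
- exact: edge_relation_crr.
- exact: generators_in_p.
Qed.

Lemma edge_relation_refl (V : variety) n (p : rterm n) : all_reflexive (@edge_relation n p V).
Proof. by move=> i a; apply: generated_refl. Qed.

Lemma condition_spec (V : variety) n (p q : rterm n) : join_free p -> join_free q ->
  satisfies_ineq V p q <-> realizes V (condition p q).
Proof.
move=> jp jq; split; last exact: condition_sound.
by move/(ineq_at_generators jp); apply: condition_complete.
Qed.

(* In general, [p <= q] is the union of the increasing chain
   of strong Mal'cev classes [p <= unjoin k q]: on the free algebra the
   generators are [q]-related iff they are [unjoin k q]-related for some [k]. *)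
Theorem theorem1 (n : nat) (p q : rterm n) :
  join_free p ->
  malcev_class (fun V : variety =>
    forall A : algebra (@varity V), in_variety A -> crr_ineq A p q) /\
  (join_free q ->
   strong_malcev_class (fun V : variety =>
     forall A : algebra (@varity V), in_variety A -> crr_ineq A p q)).
Proof.
move=> jp; have spec k V := condition_spec V jp (unjoin_join_free k q).
split; last by move=> jq; exists (condition p q) => V; apply: condition_spec.
exists (fun k => condition p (unjoin k q)); split.
- move=> k V /spec /(ineq_at_generators jp) at_k.
  apply: (condition_complete (unjoin_join_free k.+1 q)).
  exact: (unjoin_mono (@edge_relation_refl V _ p) (leqnSn k) at_k).
- move=> V; split.
  + move/(ineq_at_generators jp)/(unjoin_exhaust (@edge_relation_refl V _ p)) => [k at_k].
    by exists k; apply: (condition_complete (unjoin_join_free k q)).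
  + move=> [k /spec ineq_k] A A_in R R_crr a b pab.
    exact: unjoin_sub (ineq_k A A_in R R_crr a b pab).
Qed.
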